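(* Let $m,n\ge 1$, $I=\{1,\dots,m\}$, and consider the problem $$\text{(P)}\qquad \max\ z(\boldsymbol{x}) := \sum_{i=1}^m\sum_{j=1}^n v_{ij}x_{ij}\quad\text{s.t.}\quad \sum_{j=1}^n \bar{w}_{ij}x_{ij}\le 1\ (i\in I),\quad \boldsymbol{x}\in X\subseteq\{0,1\}^{m\times n},$$ where, for each $i\in I$, $\bar{\boldsymbol{w}}_i=(\bar w_{i1},\dots,\bar w_{in})\in W_i$, with $W_i\subseteq[0,1]^n$ a set given by $[0,1]^n$ intersected with finitely many linear inequalities, and $W:=\prod_{i\in I}W_i$. For each $i\in I$, let $X_i$ be the projection of $X$ onto the variables $\boldsymbol{x}_i=(x_{i1},\dots,x_{in})$, and let $S^+_i, S^-_i\subseteq X_i$ be finite sets such that every $\boldsymbol{\sigma}^+\in S^+_i$ satisfies $\bar{\boldsymbol{w}}_i\cdot\boldsymbol{\sigma}^+\le 1$ and every $\boldsymbol{\sigma}^-\in S^-_i$ satisfies $\bar{\boldsymbol{w}}_i\cdot\boldsymbol{\sigma}^->1$. Consider the problem, in variables $\boldsymbol{x}$ and $\boldsymbol{w}=(w_{ij})$, $$\text{(B)}\qquad \max\ z(\boldsymbol{x})\quad \text{s.t.}\quad \begin{cases}\sum_{j=1}^n w_{ij}x_{ij}\le 1, & i\in I,\\ \sum_{j=1}^n w_{ij}\sigma^+_j\le 1, & \boldsymbol{\sigma}^+\in S^+_i,\ i\in I,\\ \sum_{j=1}^n w_{ij}\sigma^-_j\ge 1, & \boldsymbol{\sigma}^-\in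 S^-_i,\ i\in I,\\ \sum_{j=1}^n x_{ij}\sigma^-_j\le \sum_{j=1}^n\sigma^-_j-1, & \boldsymbol{\sigma}^-\in S^-_i,\ i\in I,\\ \boldsymbol{x}\in X,\quad \boldsymbol{w}\in W.\end{cases}$$ Then for any optimal solution $(\boldsymbol{x}^*,\boldsymbol{w}^* )$ of (B) and any optimal solution $\boldsymbol{x}^{\circledast}$ of (P), one has $z(\boldsymbol{x}^* )\ge z(\boldsymbol{x}^{\circledast})$.
   Context: In the paper's setting, the weights $\bar{\boldsymbol{w}}_i$ are unknown and $S^+_i$, $S^-_i$ are the sets of sub-solutions $\boldsymbol{x}_i\in X_i$ that have been labeled by a membership oracle as satisfying, respectively violating, the $i$-th constraint $\bar{\boldsymbol{w}}_i\cdot\boldsymbol{x}_i\le 1$. *)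

From mathcomp Require Import all_boot all_order all_algebra.
Set Implicit Arguments. Unset Strict Implicit. Unset Printing Implicit Defensive.
Import Order.TTheory GRing.Theory Num.Theory.
Local Open Scope ring_scope.

Definition bR (R : numDomainType) (b : bool) : R := (b : nat)%:R.

Section Defs.
Variables (R : realFieldType) (m n : nat).

Definition zobj (v : 'M[R]_(m, n)) (x : 'M[bool]_(m, n)) : R :=
  \sum_(i < m) \sum_(j < n) v i j * bR R (x i j).

Definition dotb (w : 'M[R]_(m, n)) (i : 'I_m) (s : 'rV[bool]_n) : R :=
  \sum_(j < n) w i j * bR R (s 0 j).

Definition inW (k : 'I_m -> nat) (A : forall i, 'M[R]_(k i, n))
  (b : forall i, 'cV[R]_(k i)) (w : 'M[R]_(m, n)) : Prop :=
  forall i : 'I_m,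
    (forall j : 'I_n, 0 <= w i j <= 1) /\
    (forall l : 'I_(k i), \sum_(j < n) A i l j * w i j <= b i l 0).

Definition projX (X : {set 'M[bool]_(m, n)}) (i : 'I_m) : {set 'rV[bool]_n} :=
  [set row i x | x in X].

Definition feasP (X : {set 'M[bool]_(m, n)}) (wbar : 'M[R]_(m, n))
  (x : 'M[bool]_(m, n)) : Prop :=
  x \in X /\ forall i, dotb wbar i (row i x) <= 1.

Definition optP (v : 'M[R]_(m, n)) (X : {set 'M[bool]_(m, n)}) (wbar : 'M[R]_(m, n)) (x : 'M[bool]_(m, n)) : Prop :=
  feasP X wbar x /\ forall y, feasP X wbar y -> zobj v y <= zobj v x.

Definition feasB (X : {set 'M[bool]_(m, n)}) k A b
  (Sp Sm : 'I_m -> {set 'rV[bool]_n})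
  (x : 'M[bool]_(m, n)) (w : 'M[R]_(m, n)) : Prop :=
  [/\ (forall i, dotb w i (row i x) <= 1) /\ x \in X,
      (forall i s, s \in Sp i -> dotb w i s <= 1),
      (forall i s, s \in Sm i -> 1 <= dotb w i s),
      (forall i s, s \in Sm i ->
        (\sum_(j < n) bR R (x i j) * bR R (s 0 j))
          <= (\sum_(j < n) bR R (s 0 j)) - 1)
      & @inW k A b w].

Definition optB (v : 'M[R]_(m, n)) (X : {set 'M[bool]_(m, n)}) (k : 'I_m -> nat)
  (A : forall i, 'M[R]_(k i, n)) (b : forall i, 'cV[R]_(k i))
  (Sp Sm : 'I_m -> {set 'rV[bool]_n}) (x : 'M[bool]_(m, n)) (w : 'M[R]_(m, n)) : Prop :=
  feasB X A b Sp Sm x w /\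
  forall y u, feasB X A b Sp Sm y u -> zobj v y <= zobj v x.

End Defs.

From mathcomp Require Import all_boot all_order all_algebra.
Set Implicit Arguments. Unset Strict Implicit. Unset Printing Implicit Defensive.
Import Order.TTheory GRing.Theory Num.Theory.
Local Open Scope ring_scope.

(* The true weights [wbar] together with an optimal solution of (P) form a
   feasible point of (B): the labels of [S^+] and [S^-] make the second and
   third families of constraints hold, and the no-good cut for [sigma^-] holds
   because [x_i] must miss some item of [sigma^-]; otherwise, the weights being
   nonnegative, [wbar_i . sigma^- <= wbar_i . x_i <= 1]. *)

Section BooleanSums.
Variables (R : numDomainType) (n : nat).

Lemma sum_bR_le_of_implies (w : 'I_n -> R) (s t : 'I_n -> bool) :
  (forall j, 0 <= w j) -> (forall j, s j ==> t j) ->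
  \sum_(j < n) w j * bR R (s j) <= \sum_(j < n) w j * bR R (t j).
Proof.
move=> w_ge0 st; apply: ler_sum => j _.
by move: (st j) (w_ge0 j); case: (s j); case: (t j) => //= _; rewrite /bR mulr0 mulr1.
Qed.

Lemma nogood_cut (x s : 'I_n -> bool) :
  (exists j, s j && ~~ x j) ->
  \sum_(j < n) bR R (x j) * bR R (s j) <= \sum_(j < n) bR R (s j) - 1.
Proof.
case=> j /andP[sj xj].
rewrite lerBrDr addrC -lerBrDr -sumrB (bigD1 j) //= sj (negbTE xj).
rewrite /bR /= mul0r subr0 lerDl; apply: sumr_ge0 => l _.
by case: (s l); case: (x l); rewrite /bR /= ?mul1r ?mul0r ?subrr ?subr0.
Qed.

End BooleanSums.

Section Relaxation.
Variables (R : realFieldType) (m n : nat).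

Lemma nogood_cut_of_separation (w : 'M[R]_(m, n)) (i : 'I_m)
    (x : 'M[bool]_(m, n)) (s : 'rV[bool]_n) :
  (forall j, 0 <= w i j) -> dotb w i (row i x) <= 1 -> 1 < dotb w i s ->
  \sum_(j < n) bR R (x i j) * bR R (s 0 j) <= \sum_(j < n) bR R (s 0 j) - 1.
Proof.
move=> w_ge0 x_le1 s_gt1; apply: nogood_cut.
apply/existsP; apply: contraT => /existsPn s_sub_x.
have s_le_x : dotb w i s <= dotb w i (row i x).
  apply: sum_bR_le_of_implies => // j.
  by rewrite mxE; move: (s_sub_x j); case: (s 0 j); case: (x i j).
by move: s_gt1; rewrite ltNge (le_trans s_le_x x_le1).
Qed.

Lemma feasB_of_feasP (X : {set 'M[bool]_(m, n)}) (k : 'I_m -> nat)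
    (A : forall i, 'M[R]_(k i, n)) (b : forall i, 'cV[R]_(k i))
    (Sp Sm : 'I_m -> {set 'rV[bool]_n}) (wbar : 'M[R]_(m, n))
    (x : 'M[bool]_(m, n)) :
  inW A b wbar ->
  (forall i s, s \in Sp i -> dotb wbar i s <= 1) ->
  (forall i s, s \in Sm i -> 1 < dotb wbar i s) ->
  feasP X wbar x -> feasB X A b Sp Sm x wbar.
Proof.
move=> wbarW Sp_lab Sm_lab [xX x_le1]; split=> // [i s /Sm_lab/ltW //|i s s_in].
apply: nogood_cut_of_separation (x_le1 i) (Sm_lab i s s_in) => j.
by case: (wbarW i) => /(_ j)/andP[].
Qed.

End Relaxation.

Theorem proposition1 (R : realFieldType) (m n : nat)
  (hm : (0 < m)%N) (hn : (0 < n)%N)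
  (v : 'M[R]_(m, n)) (X : {set 'M[bool]_(m, n)})
  (k : 'I_m -> nat) (A : forall i, 'M[R]_(k i, n)) (b : forall i, 'cV[R]_(k i))
  (wbar : 'M[R]_(m, n)) (hwbar : inW A b wbar)
  (Sp Sm : 'I_m -> {set 'rV[bool]_n})
  (hSp : forall i, Sp i \subset projX X i)
  (hSm : forall i, Sm i \subset projX X i)
  (hSp_lab : forall i s, s \in Sp i -> dotb wbar i s <= 1)
  (hSm_lab : forall i s, s \in Sm i -> 1 < dotb wbar i s)
  (xs : 'M[bool]_(m, n)) (ws : 'M[R]_(m, n))
  (hB : optB v X A b Sp Sm xs ws)
  (xo : 'M[bool]_(m, n)) (hP : optP v X wbar xo) :
  zobj v xo <= zobj v xs.
Proof.
have [_ xs_opt] := hB; have [xo_feas _] := hP.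
exact: xs_opt (feasB_of_feasP hwbar hSp_lab hSm_lab xo_feas).
Qed.
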